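(* Let $S\subseteq R$ be an extension of commutative domains. Then $R$ is super-multiplicative if and only if for every maximal ideal $\mathfrak m$ of $S$ the ring $R_{\mathfrak m}$ is super-multiplicative.
   Context: $R_{\mathfrak m}$ denotes the localization of $R$ at the multiplicative set $S\setminus\mathfrak m$. For a commutative ring $A$ and an ideal $I$ with $[A:I]$ finite, $N(I)=[A:I]$ (additive index). $A$ is super-multiplicative if for every pair of $A$-ideals $I,J$ with $[A:IJ]$ finite one has $N(IJ)\geq N(I)N(J)$. *)

From HB Require Import structures.
From mathcomp Require Import all_boot all_order all_algebra.
Set Implicit Arguments. Unset Strict Implicit. Unset Printing Implicit Defensive.
Import Order.TTheory GRing.Theory Num.Theory.
Local Open Scope ring_scope.

Section IdealTheory.
Variable T : comRingType.

Definition is_subring (A : T -> Prop) : Prop :=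
  [/\ A 1, (forall x y, A x -> A y -> A (x - y))
     & (forall x y, A x -> A y -> A (x * y))].

Definition is_ideal (A I : T -> Prop) : Prop :=
  [/\ (forall x, I x -> A x), I 0,
      (forall x y, I x -> I y -> I (x - y))
    & (forall a x, A a -> I x -> I (a * x))].

Definition ideal_mul (I J : T -> Prop) : T -> Prop :=
  fun z => exists (n : nat) (x y : 'I_n -> T),
    (forall i, I (x i) /\ J (y i)) /\ z = \sum_(i < n) x i * y i.

(* ideal_index A I n  <->  [A : I] is finite and equal to n, i.e. the
   additive quotient A/I has exactly n cosets (a complete, irredundant
   system of n coset representatives exists). *)
Definition ideal_index (A I : T -> Prop) (n : nat) : Prop :=
  exists r : 'I_n -> T,
    [/\ (forall i, A (r i)),
        (forall i j, I (r i - r j) -> i = j)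
      & (forall a, A a -> exists i, I (a - r i))].

(* A is super-multiplicative: for all ideals I, J of A with [A:IJ]
   finite, N(IJ) >= N(I) N(J).  (Finiteness of [A:I], [A:J] follows from
   IJ being contained in I and J.) *)
Definition super_multiplicative (A : T -> Prop) : Prop :=
  forall I J, is_ideal A I -> is_ideal A J ->
    forall n p q, ideal_index A (ideal_mul I J) n ->
      ideal_index A I p -> ideal_index A J q -> (p * q <= n)%N.

Definition is_maximal_ideal (A m : T -> Prop) : Prop :=
  [/\ is_ideal A m, ~ m 1 &
      forall J, is_ideal A J -> (forall x, m x -> J x) ->
        (forall x, J x -> m x) \/ J 1].

End IdealTheory.

(* For a domain R and a subring S, the localization R_m = (S \ m)^{-1} R,
   realized (canonically) inside the fraction field of R. *)
Definition localization (R : idomainType) (S m : R -> Prop) :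
    {fraction R} -> Prop :=
  fun x => exists r s : R, [/\ S s, ~ m s &
    x = FracField.tofrac r / FracField.tofrac s].

(* If [R : IJ] is finite and m is a maximal ideal of S, pigeonhole on powers
   shows that every s in S outside m has a power congruent to 1 modulo the
   ideal IJ of R_m, so R maps onto R_m / IJ.  Contracting I, J and IJ to R
   thus preserves the three indices, and contraction commutes with products
   of ideals; hence R_m inherits super-multiplicativity from R.
   Conversely, argue by induction on [R : IJ].  Pick e in S idempotent modulo
   IJ and primitive among such idempotents.  The elements of S that are
   nilpotent on e (R / IJ) form a maximal ideal m of S, and every other element
   of S acts invertibly on it, so R / (IJ + (1 - e) R) is a quotient of R_m and
   is controlled by super-multiplicativity of R_m.  The indices of I, J and IJ
   split as products along e, and the factor R / (IJ + e R) has smaller index,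
   so the induction hypothesis applies to it. *)

From HB Require Import structures.
From mathcomp Require Import all_boot all_order all_algebra.
From mathcomp Require Import ring.
From Stdlib Require Import Classical ClassicalEpsilon.
Set Implicit Arguments. Unset Strict Implicit. Unset Printing Implicit Defensive.
Import GRing.Theory.
Local Open Scope ring_scope.

Definition asbool (P : Prop) : bool :=
  if excluded_middle_informative P then true else false.

Lemma asboolP (P : Prop) : reflect P (asbool P).
Proof. by rewrite /asbool; case: excluded_middle_informative => h; constructor. Qed.

Section Ideals.
Variable T : comRingType.
Implicit Types (A I J L : T -> Prop) (x y z a : T).

Definition is_addgroup L := L 0 /\ (forall x y, L x -> L y -> L (x - y)).

Section AddGroup.
Variables (L : T -> Prop) (hL : is_addgroup L).

Lemma addgroup0 : L 0. Proof. by case: hL. Qed.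

Lemma addgroupB x y : L x -> L y -> L (x - y). Proof. by case: hL => _; apply. Qed.

Lemma addgroupN x : L x -> L (- x).
Proof. by move=> Lx; rewrite -sub0r; apply: addgroupB; first exact: addgroup0. Qed.

Lemma addgroupD x y : L x -> L y -> L (x + y).
Proof. by move=> Lx Ly; rewrite -(opprK y); apply: addgroupB => //; apply: addgroupN. Qed.

Lemma addgroup_sym x y : L (x - y) -> L (y - x).
Proof. by move=> Lxy; rewrite -opprB; apply: addgroupN. Qed.

Lemma addgroup_trans y x z : L (x - y) -> L (y - z) -> L (x - z).
Proof. by move=> Lxy Lyz; rewrite -(subrKA y); apply: addgroupD. Qed.

End AddGroup.

Lemma subring0 A : is_subring A -> A 0.
Proof. by case=> A1 AB _; rewrite -(subrr 1); apply: AB. Qed.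

Lemma subring_addgroup A : is_subring A -> is_addgroup A.
Proof. by move=> hA; split; [exact: subring0 hA | case: hA]. Qed.

Lemma subringB A x y : is_subring A -> A x -> A y -> A (x - y).
Proof. by case=> _ AB _; apply: AB. Qed.

Lemma subringD A x y : is_subring A -> A x -> A y -> A (x + y).
Proof. by move/subring_addgroup/addgroupD; apply. Qed.

Lemma subringM A x y : is_subring A -> A x -> A y -> A (x * y).
Proof. by case=> _ _ AM; apply: AM. Qed.

Lemma subringX A x k : is_subring A -> A x -> A (x ^+ k).
Proof.
move=> hA Ax; elim: k => [|k IH]; first by rewrite expr0; case: hA.
by rewrite exprS; apply: subringM.
Qed.

Lemma ideal_addgroup A I : is_ideal A I -> is_addgroup I.
Proof. by case=> _ I0 IB _. Qed.

Section Ideal.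
Variables (A I : T -> Prop) (hI : is_ideal A I).

Lemma ideal_sub x : I x -> A x. Proof. by case: hI => sub _ _ _; apply: sub. Qed.

Lemma ideal0 : I 0. Proof. exact: addgroup0 (ideal_addgroup hI). Qed.

Lemma idealB x y : I x -> I y -> I (x - y).
Proof. by move=> Ix Iy; exact: (addgroupB (ideal_addgroup hI) Ix Iy). Qed.

Lemma idealD x y : I x -> I y -> I (x + y).
Proof. by move=> Ix Iy; exact: (addgroupD (ideal_addgroup hI) Ix Iy). Qed.

Lemma idealN x : I x -> I (- x).
Proof. by move=> Ix; exact: (addgroupN (ideal_addgroup hI) Ix). Qed.

Lemma idealMl a x : A a -> I x -> I (a * x). Proof. by case: hI => _ _ _; apply. Qed.

Lemma idealMr a x : A a -> I x -> I (x * a).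
Proof. by move=> Aa Ix; rewrite mulrC; apply: idealMl. Qed.

Lemma ideal_sum n (F : 'I_n -> T) : (forall i, I (F i)) -> I (\sum_(i < n) F i).
Proof. by move=> IF; apply: (big_ind I) => //; [apply: ideal0 | apply: idealD]. Qed.

End Ideal.

Lemma maximal_ideal_prime A m s t : is_subring A -> is_maximal_ideal A m ->
  A s -> A t -> ~ m s -> ~ m t -> ~ m (s * t).
Proof.
move=> hA [hm _ maxm] As At ms mt mst.
(* J = A s + m strictly contains m, hence contains 1. *)
pose J z := exists y w, [/\ A y, m w & z = y * s + w].
have hJ : is_ideal A J.
  split.
  - move=> _ [y [w [Ay mw ->]]].
    exact: (subringD hA (subringM hA Ay As) (ideal_sub hm mw)).
  - by exists 0, 0; split; [exact: subring0 hA | exact: ideal0 hm | rewrite mul0r addr0].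
  - move=> _ _ [y [w [Ay mw ->]]] [y' [w' [Ay' mw' ->]]].
    exists (y - y'), (w - w'); split; last by ring.
    + exact: (subringB hA Ay Ay').
    + exact: (idealB hm mw mw').
  - move=> c _ Ac [y [w [Ay mw ->]]].
    exists (c * y), (c * w); split; last by ring.
    + exact: (subringM hA Ac Ay).
    + exact: (idealMl hm Ac mw).
case: (maxm J hJ) => [w mw | sub | [y [w [Ay mw ys]]]].
- by exists 0, w; split => //; [exact: subring0 hA | ring].
- by apply/ms/sub; exists 1, 0; split; [case: hA | exact: ideal0 hm | ring].
- apply: mt; have -> : t = y * (s * t) + t * w by rewrite mulrA (mulrC t) -mulrDl -ys mul1r.
  exact: (idealD hm (idealMl hm Ay mst) (idealMl hm At mw)).
Qed.

Lemma maximal_ideal_primeX A m s k : is_subring A -> is_maximal_ideal A m ->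
  A s -> ~ m s -> ~ m (s ^+ k).
Proof.
move=> hA hm As ms; elim: k => [|k IH]; first by rewrite expr0; case: hm.
by rewrite exprS; apply: (maximal_ideal_prime hA hm) => //; apply: subringX.
Qed.

Lemma ideal_mul_ind I J (P : T -> Prop) z : P 0 ->
  (forall x y, P x -> P y -> P (x + y)) -> (forall x y, I x -> J y -> P (x * y)) ->
  ideal_mul I J z -> P z.
Proof.
move=> P0 PD PM [n [x [y [IJxy ->]]]].
by apply: (big_ind P) => // i _; case: (IJxy i) => Ix Jy; apply: PM.
Qed.

Lemma ideal_mul0 I J : ideal_mul I J 0.
Proof.
by exists 0%N, (fun _ => 0), (fun _ => 0); split; [case | rewrite big_ord0].
Qed.

Lemma ideal_mul_mem I J x y : I x -> J y -> ideal_mul I J (x * y).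
Proof.
by move=> Ix Jy; exists 1%N, (fun _ => x), (fun _ => y); rewrite big_ord1.
Qed.

Lemma ideal_mulD I J x y :
  ideal_mul I J x -> ideal_mul I J y -> ideal_mul I J (x + y).
Proof.
move=> [n [x1 [y1 [IJ1 ->]]]] [k [x2 [y2 [IJ2 ->]]]].
pose glue (f1 : 'I_n -> T) (f2 : 'I_k -> T) i :=
  match split i with inl a => f1 a | inr b => f2 b end.
exists (n + k)%N, (glue x1 x2), (glue y1 y2); split.
  by move=> i; rewrite /glue; case: (split i).
rewrite big_split_ord /=; congr (_ + _); apply: eq_bigr => i _.
  by rewrite /glue (unsplitK (inl i)).
by rewrite /glue (unsplitK (inr i)).
Qed.

Lemma ideal_mul_mono I J I' J' z : (forall x, I x -> I' x) ->
  (forall y, J y -> J' y) -> ideal_mul I J z -> ideal_mul I' J' z.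
Proof.
move=> II' JJ' [n [x [y [IJxy ->]]]]; exists n, x, y; split => // i.
by case: (IJxy i) => Ix Jy; split; [apply: II' | apply: JJ'].
Qed.

Lemma ideal_mulMl A I J a z :
  is_ideal A I -> A a -> ideal_mul I J z -> ideal_mul I J (a * z).
Proof.
move=> hI Aa; apply: (ideal_mul_ind (P := fun z => ideal_mul I J (a * z))).
- by rewrite mulr0; apply: ideal_mul0.
- by move=> x y IJx IJy; rewrite mulrDr; apply: ideal_mulD.
- by move=> x y Ix Jy; rewrite mulrA; apply: ideal_mul_mem => //; exact: (idealMl hI Aa Ix).
Qed.

Lemma ideal_mul_addgroup A I J : is_ideal A I -> is_addgroup (ideal_mul I J).
Proof.
move=> hI; split; first exact: ideal_mul0.
move=> x y IJx IJy; apply: ideal_mulD => //.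
apply: (ideal_mul_ind (P := fun y => ideal_mul I J (- y))) IJy.
- by rewrite oppr0; apply: ideal_mul0.
- by move=> u v IJu IJv; rewrite opprD; apply: ideal_mulD.
- by move=> u v Iu Jv; rewrite -mulNr; apply: ideal_mul_mem => //; exact: (idealN hI Iu).
Qed.

Lemma ideal_mul_subl A I J z :
  is_ideal A I -> (forall y, J y -> A y) -> ideal_mul I J z -> I z.
Proof.
move=> hI JA; apply: ideal_mul_ind; [exact: ideal0 hI | exact: idealD hI |].
by move=> x y Ix Jy; exact: (idealMr hI (JA y Jy) Ix).
Qed.

Lemma ideal_mul_subr A I J z :
  is_ideal A J -> (forall x, I x -> A x) -> ideal_mul I J z -> J z.
Proof.
move=> hJ IA; apply: ideal_mul_ind; [exact: ideal0 hJ | exact: idealD hJ |].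
by move=> x y Ix Jy; exact: (idealMl hJ (IA x Ix) Jy).
Qed.

Lemma ideal_mul_ideal A I J :
  is_ideal A I -> is_ideal A J -> is_ideal A (ideal_mul I J).
Proof.
move=> hI hJ; split.
- by move=> z /(ideal_mul_subl hI (ideal_sub hJ)) /(ideal_sub hI).
- exact: ideal_mul0.
- by move=> x y; apply: (addgroupB (ideal_mul_addgroup J hI)).
- by move=> a x Aa; apply: (ideal_mulMl hI Aa).
Qed.

End Ideals.

Section Index.
Variable T : comRingType.
Implicit Types (A L : T -> Prop) (x y z a : T).

Lemma index_ext A L L' n :
  (forall x, L x <-> L' x) -> ideal_index A L n -> ideal_index A L' n.
Proof.
move=> LL' [r [Ar r_inj r_onto]]; exists r; split => //.
- by move=> i j /LL'; apply: r_inj.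
- by move=> a /r_onto [i /LL' Lar]; exists i.
Qed.

Lemma index_leq A L n n' :
  is_addgroup L -> ideal_index A L n -> ideal_index A L n' -> (n <= n')%N.
Proof.
move=> hL [r [Ar r_inj _]] [r' [_ _ r'_onto]].
have [f Lrf] := fin_all_exists (fun i : 'I_n => r'_onto (r i) (Ar i)).
have f_inj : injective f.
  move=> i j fij; apply: r_inj; apply: (addgroup_trans hL (Lrf i)).
  by rewrite fij; exact: (addgroup_sym hL (Lrf j)).
by have := leq_card f f_inj; rewrite !card_ord.
Qed.

Lemma index_unique A L n n' :
  is_addgroup L -> ideal_index A L n -> ideal_index A L n' -> n = n'.
Proof.
move=> hL hn hn'; apply/eqP.
by rewrite eqn_leq (index_leq hL hn hn') (index_leq hL hn' hn).
Qed.

Lemma index_card A L (X : finType) (r : X -> T) :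
  (forall i, A (r i)) -> (forall i j, L (r i - r j) -> i = j) ->
  (forall a, A a -> exists i, L (a - r i)) -> ideal_index A L #|X|.
Proof.
move=> Ar r_inj r_onto; exists (fun k => r (enum_val k)); split => //.
- by move=> i j /r_inj /enum_val_inj.
- by move=> a /r_onto [i Lari]; exists (enum_rank i); rewrite enum_rankK.
Qed.

Lemma index_gt0 A L n : A 0 -> ideal_index A L n -> (0 < n)%N.
Proof. by move=> A0 [r [_ _ /(_ 0 A0) [i _]]]; case: n i {r} => [[]|]. Qed.

Lemma index_eq1 A L n : is_addgroup L -> (forall a, A a -> L a) -> A 0 ->
  ideal_index A L n -> n = 1%N.
Proof.
move=> hL AL A0 hn; have h1 : ideal_index A L #|'I_1|.
  apply: (@index_card A L _ (fun _ => 0)) => //.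
  - by move=> i j _; rewrite (ord1 i) (ord1 j).
  - by move=> a Aa; exists ord0; rewrite subr0; apply: AL.
by rewrite (index_unique hL hn h1) card_ord.
Qed.

Lemma index_gt1 A L n : is_addgroup L -> ~ L 1 -> A 0 -> A 1 ->
  ideal_index A L n -> (1 < n)%N.
Proof.
move=> hL nL1 A0 A1 [r [_ _ r_onto]].
case: n r r_onto => [|[|n]] // r r_onto.
- by case: (r_onto 0 A0) => [[]].
- case: (r_onto 0 A0) => i L0r; case: (r_onto 1 A1) => j L1r.
  rewrite (ord1 j) -(ord1 i) in L1r.
  exfalso; apply: nL1; rewrite -(subr0 1).
  exact: (addgroup_trans hL L1r (addgroup_sym hL L0r)).
Qed.

(* The first member of each L'-class among the L-representatives gives a
   system of L'-representatives. *)
Lemma index_coarsen A L L' n : is_addgroup L' -> (forall x, L x -> L' x) ->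
  ideal_index A L n -> exists n', ideal_index A L' n'.
Proof.
move=> hL' LL' [r [Ar _ r_onto]].
pose is_first (i : 'I_n) := asbool (forall j : 'I_n, (j < i)%N -> ~ L' (r i - r j)).
exists #|{: {i : 'I_n | is_first i}}|.
apply: (@index_card A L' _ (fun x : {i : 'I_n | is_first i} => r (val x))).
- by move=> x; apply: Ar.
- move=> [i fi] [j fj] /= L'rij; apply: val_inj => /=.
  move/asboolP: fi => fi; move/asboolP: fj => fj.
  case: (ltngtP i j) => [ij | ji | /val_inj //].
  + by case: (fj i ij); apply: addgroup_sym.
  + by case: (fi j ji).
- move=> a /r_onto [i Lari].
  pose P k := asbool (exists j : 'I_n, nat_of_ord j = k /\ L' (r i - r j)).
  have exP : exists k, P k.
    exists (nat_of_ord i); apply/asboolP; exists i.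
    by rewrite subrr; split => //; apply: addgroup0.
  case: (ex_minnP exP) => k /asboolP [j0 [<- L'rij0]] minP.
  have fj0 : is_first j0.
    apply/asboolP => j lt_j L'rj; have /minP : P j.
      by apply/asboolP; exists j; split => //; exact: (addgroup_trans hL' L'rij0 L'rj).
    by rewrite leqNgt lt_j.
  by exists (exist _ j0 fj0) => /=; exact: (addgroup_trans hL' (LL' _ Lari) L'rij0).
Qed.

Lemma index_pigeonhole A L n (f : nat -> T) : is_addgroup L ->
  ideal_index A L n -> (forall k, A (f k)) ->
  exists k k', (k < k')%N /\ L (f k - f k').
Proof.
move=> hL [r [_ _ r_onto]] Af.
have [h Lfh] := fin_all_exists (fun k : 'I_n.+1 => r_onto (f k) (Af k)).
have /injectivePn [k [k' nkk' hkk']] : ~~ injectiveb h.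
  by apply/injectiveP => /leq_card; rewrite !card_ord ltnn.
have Lfkk' : L (f k - f k').
  apply: (addgroup_trans hL (Lfh k)).
  by rewrite hkk'; exact: (addgroup_sym hL (Lfh k')).
case: (ltngtP k k') => [lt | gt | /val_inj eq]; last by rewrite eq eqxx in nkk'.
- by exists k, k'.
- by exists k', k; split => //; apply: addgroup_sym.
Qed.

End Index.

Section IndexTransport.
Variables (T T' : comRingType) (A L : T -> Prop) (B M : T' -> Prop) (g : T -> T').
Hypotheses (hM : is_addgroup M) (gAB : forall a, A a -> B (g a)).
Hypothesis g_congr : forall a a', A a -> A a' -> L (a - a') <-> M (g a - g a').
Hypothesis g_onto : forall b, B b -> exists2 a, A a & M (b - g a).

Lemma index_transport n : ideal_index A L n <-> ideal_index B M n.
Proof.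
split=> [[r [Ar r_inj r_onto]] | [r [Br r_inj r_onto]]].
  exists (g \o r); split => [i | i j | b /g_onto [a Aa Mba]] /=.
  - exact: gAB.
  - by move/(g_congr (Ar i) (Ar j)); apply: r_inj.
  - have [i /(g_congr Aa (Ar i)) Mari] := r_onto a Aa.
    by exists i; exact: (addgroup_trans hM Mba Mari).
have [a Aa Mra] := fin_all_exists2 (fun i : 'I_n => g_onto (Br i)).
exists a; split => // [i j /(g_congr (Aa i) (Aa j)) Maij | x Ax].
  apply: r_inj; apply: (addgroup_trans hM (Mra i)).
  exact: (addgroup_trans hM Maij (addgroup_sym hM (Mra j))).
have [i Mgxr] := r_onto _ (gAB Ax).
by exists i; apply/(g_congr Ax (Aa i)); exact: (addgroup_trans hM Mgxr (Mra i)).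
Qed.

End IndexTransport.

Section Localization.
Variables (R : idomainType) (S m : R -> Prop).
Hypotheses (hS : is_subring S) (hm : is_maximal_ideal S m).
Local Notation tf := (@FracField.tofrac R).
Local Notation Rm := (localization S m).
Local Notation RR := (fun _ : R => True).

Lemma tofrac_neq0 s : ~ m s -> tf s != 0.
Proof.
move=> ms; rewrite tofrac_eq0; apply: contra_notN ms => /eqP ->.
by case: hm => hmS _ _; apply: ideal0 hmS.
Qed.

Lemma localization_tofrac a : Rm (tf a).
Proof. by exists a, 1; split; [case: hS | case: hm | rewrite tofrac1 divr1]. Qed.

Lemma localization_inv s : S s -> ~ m s -> Rm (tf s)^-1.
Proof. by move=> Ss ms; exists 1, s; split; rewrite // tofrac1 div1r. Qed.

Lemma localization_numerator I x : is_ideal Rm I -> I x ->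
  exists a u, [/\ S u, ~ m u, I (tf a) & x = tf a / tf u].
Proof.
move=> hI Ix; have [a [u [Su mu ex]]] := ideal_sub hI Ix.
exists a, u; split => //.
suff -> : tf a = tf u * x by apply: (idealMl hI _ Ix); exact: localization_tofrac.
by rewrite ex mulrC divfK // tofrac_neq0.
Qed.

Section FiniteIndex.
Variables (L : {fraction R} -> Prop) (hL : is_ideal Rm L) (k : nat).
Hypothesis hk : ideal_index Rm L k.

Lemma ideal_cancel_unit s n y : S s -> ~ m s -> L (tf s ^+ n * y) -> L y.
Proof.
move=> Ss ms Lsy; have msn : ~ m (s ^+ n) := maximal_ideal_primeX hS hm Ss ms.
rewrite -[y](mulKf (tofrac_neq0 msn)) tofracXn.
apply: (idealMl hL _ Lsy); rewrite -tofracXn.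
by apply: localization_inv => //; apply: subringX.
Qed.

Lemma localization_unit_power s : S s -> ~ m s -> exists c, L (1 - tf s ^+ c.+1).
Proof.
move=> Ss ms; have Rms i : Rm (tf s ^+ i) by rewrite -tofracXn; apply: localization_tofrac.
have [i [j [lt_ij Lsij]]] := index_pigeonhole (ideal_addgroup hL) hk Rms.
exists (j - i).-1; rewrite prednK ?subn_gt0 //.
apply: (ideal_cancel_unit (n := i) Ss ms).
by rewrite mulrBr mulr1 -exprD subnKC // ltnW.
Qed.

Lemma localization_onto x : Rm x -> exists a : R, L (x - tf a).
Proof.
move=> [r [s [Ss ms ->]]]; have [c Lsc] := localization_unit_power Ss ms.
exists (r * s ^+ c).
suff -> : tf r / tf s - tf (r * s ^+ c) = tf r / tf s * (1 - tf s ^+ c.+1).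
  by apply: (idealMl hL _ Lsc); exists r, s.
rewrite tofracM tofracXn exprS mulrBr mulr1 mulrA divfK //; exact: tofrac_neq0.
Qed.

End FiniteIndex.

Definition contraction (L : {fraction R} -> Prop) : R -> Prop := fun a => L (tf a).

Lemma contraction_ideal L : is_ideal Rm L -> is_ideal RR (contraction L).
Proof.
move=> hL; split => //.
- by rewrite /contraction tofrac0; exact: ideal0 hL.
- by move=> x y; rewrite /contraction tofracB; apply: (idealB hL).
- move=> a x _; rewrite /contraction tofracM.
  by apply: (idealMl hL); apply: localization_tofrac.
Qed.

Lemma index_contraction L n :
  is_ideal Rm L -> ideal_index Rm L n -> ideal_index RR (contraction L) n.
Proof.
move=> hL hn.
have tf_congr a a' : RR a -> RR a' -> contraction L (a - a') <-> L (tf a - tf a').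
  by rewrite /contraction tofracB.
have tf_onto x : Rm x -> exists2 a, RR a & L (x - tf a).
  by move=> /(localization_onto hL hn) [a La]; exists a.
exact/(index_transport (ideal_addgroup hL) (fun a _ => localization_tofrac a)
  tf_congr tf_onto).
Qed.

Lemma ideal_mul_clear_denom I J z : is_ideal Rm I -> is_ideal Rm J ->
  ideal_mul I J z -> exists s w, [/\ S s, ~ m s,
    ideal_mul (contraction I) (contraction J) w & tf w = tf s * z].
Proof.
move=> hI hJ IJz; elim/ideal_mul_ind: IJz.
- exists 1, 0; split; [by case: hS | by case: hm | exact: ideal_mul0 |].
  by rewrite tofrac0 mulr0.
- move=> z1 z2 [s1 [w1 [Ss1 ms1 hw1 e1]]] [s2 [w2 [Ss2 ms2 hw2 e2]]].
  exists (s1 * s2), (s2 * w1 + s1 * w2); split.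
  + exact: subringM.
  + exact: (maximal_ideal_prime hS hm).
  + by apply: ideal_mulD; apply: (ideal_mulMl (contraction_ideal hI)).
  + by rewrite tofracD !tofracM e1 e2 mulrDr !mulrA [tf s2 * _]mulrC.
- move=> x y Ix Jy.
  have [a [u [Su mu Ia ->]]] := localization_numerator hI Ix.
  have [b [v [Sv mv Jb ->]]] := localization_numerator hJ Jy.
  exists (u * v), (a * b); split.
  + exact: subringM.
  + exact: (maximal_ideal_prime hS hm).
  + exact: ideal_mul_mem.
  + rewrite mulf_div -!tofracM [RHS]mulrC divfK // tofrac_neq0 //.
    exact: (maximal_ideal_prime hS hm).
Qed.

Lemma contraction_ideal_mul I J n : is_ideal Rm I -> is_ideal Rm J ->
  ideal_index Rm (ideal_mul I J) n ->
  forall z, contraction (ideal_mul I J) z <-> ideal_mul (contraction I) (contraction J) z.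
Proof.
move=> hI hJ hn z; have hK := ideal_mul_ideal hI hJ; split; last first.
  elim/ideal_mul_ind => [|x y|x y Ix Jy]; rewrite /contraction.
  - by rewrite tofrac0; apply: ideal_mul0.
  - by rewrite tofracD; apply: ideal_mulD.
  - by rewrite tofracM; apply: ideal_mul_mem.
move=> IJz; have [s [w [Ss ms IJw ew]]] := ideal_mul_clear_denom hI hJ IJz.
have wsz : w = s * z by apply/eqP; rewrite -tofrac_eq tofracM ew.
have [c IJs] := localization_unit_power hK hn Ss ms.
set u := 1 - s ^+ c.+1 in IJs.
have IJu : contraction (ideal_mul I J) u by rewrite /contraction tofracB tofrac1 tofracXn.
have Iu := ideal_mul_subl hI (ideal_sub hJ) IJu.
have Ju := ideal_mul_subr hJ (ideal_sub hI) IJu.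
(* 1 - u ^+ 2 = s ^+ c.+1 * (1 + u) *)
have -> : z = z * (u * u) + (s ^+ c * (1 + u)) * (s * z).
  by rewrite /u exprS; ring.
apply: ideal_mulD.
  by apply: (ideal_mulMl (contraction_ideal hI)) => //; apply: ideal_mul_mem.
by rewrite -wsz; apply: (ideal_mulMl (contraction_ideal hI)).
Qed.

Lemma localization_super_multiplicative :
  super_multiplicative RR -> super_multiplicative Rm.
Proof.
move=> smR I J hI hJ n p q hn hp hq.
have hn' := index_contraction (ideal_mul_ideal hI hJ) hn.
apply: (smR _ _ (contraction_ideal hI) (contraction_ideal hJ) n).
- exact: index_ext (contraction_ideal_mul hI hJ hn) hn'.
- exact: index_contraction hI hp.
- exact: index_contraction hJ hq.
Qed.

Definition extension (L : R -> Prop) : {fraction R} -> Prop :=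
  fun x => exists a s, [/\ L a, S s, ~ m s & x = tf a / tf s].

Lemma extension_ideal L : is_ideal RR L -> is_ideal Rm (extension L).
Proof.
move=> hL; split.
- by move=> _ [a [s [_ Ss ms ->]]]; exists a, s.
- by exists 0, 1; split; [exact: ideal0 hL | case: hS | case: hm | rewrite tofrac0 mul0r].
- move=> _ _ [a [s [La Ss ms ->]]] [b [t [Lb St mt ->]]].
  exists (a * t - b * s), (s * t); split.
  + by apply: (idealB hL); apply: (idealMr hL).
  + exact: subringM.
  + exact: (maximal_ideal_prime hS hm).
  + rewrite -mulNr addf_div ?tofrac_neq0 //.
    by rewrite mulNr -!tofracM -tofracN -tofracD.
- move=> _ _ [c [u [Su mu ->]]] [a [s [La Ss ms ->]]].
  exists (c * a), (u * s); split.
  + exact: (idealMl hL).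
  + exact: subringM.
  + exact: (maximal_ideal_prime hS hm).
  + by rewrite mulf_div !tofracM.
Qed.

Lemma extension_ideal_mul I J z : is_ideal RR I -> is_ideal RR J ->
  extension (ideal_mul I J) z <-> ideal_mul (extension I) (extension J) z.
Proof.
move=> hI hJ; have hK := ideal_mul_ideal hI hJ; split.
  move=> [a [s [IJa Ss ms ->]]]; elim/ideal_mul_ind: IJa => [|x y|x y Ix Jy].
  - by rewrite tofrac0 mul0r; apply: ideal_mul0.
  - by rewrite tofracD mulrDl; apply: ideal_mulD.
  - rewrite tofracM -mulrA; apply: ideal_mul_mem; last by exists y, s.
    by exists x, 1; split; [| case: hS | case: hm | rewrite tofrac1 divr1].
elim/ideal_mul_ind => [|x y|_ _ [a [s [Ia Ss ms ->]]] [b [t [Jb St mt ->]]]].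
- exact: ideal0 (extension_ideal hK).
- exact: (idealD (extension_ideal hK)).
- exists (a * b), (s * t); split.
  + exact: ideal_mul_mem.
  + exact: subringM.
  + exact: (maximal_ideal_prime hS hm).
  + by rewrite mulf_div !tofracM.
Qed.

End Localization.

Section Idempotents.
Variable T : comRingType.
Local Notation TT := (fun _ : T => True).
Implicit Types (I J K L : T -> Prop) (a e x y z : T).

Definition ideal_adjoin L a : T -> Prop := fun z => exists l r, L l /\ z = l + a * r.

Lemma ideal_adjoin_ideal L a : is_ideal TT L -> is_ideal TT (ideal_adjoin L a).
Proof.
move=> hL; split => //.
- by exists 0, 0; split; [exact: ideal0 hL | ring].
- move=> _ _ [l [r [Ll ->]]] [l' [r' [Ll' ->]]].
  by exists (l - l'), (r - r'); split; [exact: (idealB hL) | ring].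
- move=> c _ _ [l [r [Ll ->]]].
  by exists (c * l), (c * r); split; [exact: (idealMl hL) | ring].
Qed.

Lemma ideal_adjoin_sub L a z : is_ideal TT L -> L z -> ideal_adjoin L a z.
Proof. by move=> hL Lz; exists z, 0; rewrite mulr0 addr0. Qed.

Lemma ideal_adjoin_gen L a r : is_ideal TT L -> ideal_adjoin L a (a * r).
Proof. by move=> hL; exists 0, r; rewrite add0r; split => //; exact: ideal0 hL. Qed.

(* Chinese remainder theorem along the idempotent e of T / L. *)
Lemma index_idempotent_split L e n : is_ideal TT L -> L (e * e - e) ->
  ideal_index TT L n -> exists n1 n2, [/\ ideal_index TT (ideal_adjoin L (1 - e)) n1,
    ideal_index TT (ideal_adjoin L e) n2 & n = (n1 * n2)%N].
Proof.
move=> hL Le hn.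
have hL1 := ideal_adjoin_ideal (1 - e) hL; have g1 := ideal_addgroup hL1.
have hL2 := ideal_adjoin_ideal e hL; have g2 := ideal_addgroup hL2.
have [n1 hn1] := index_coarsen g1 (fun z => ideal_adjoin_sub (1 - e) hL) hn.
have [n2 hn2] := index_coarsen g2 (fun z => ideal_adjoin_sub e hL) hn.
exists n1, n2; split => //.
move: (hn1) (hn2) => [u [_ u_inj u_onto]] [v [_ v_inj v_onto]].
pose w (ij : 'I_n1 * 'I_n2) := e * u ij.1 + (1 - e) * v ij.2.
have wu ij : ideal_adjoin L (1 - e) (w ij - u ij.1).
  by exists 0, (v ij.2 - u ij.1); split; [exact: ideal0 hL | rewrite /w; ring].
have wv ij : ideal_adjoin L e (w ij - v ij.2).
  by exists 0, (u ij.1 - v ij.2); split; [exact: ideal0 hL | rewrite /w; ring].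
have hw : ideal_index TT L #|{: 'I_n1 * 'I_n2}|.
  apply: (@index_card _ _ _ _ w) => // [[i j] [i' j'] Lw | a _].
    have Lw1 := ideal_adjoin_sub (1 - e) hL Lw; have Lw2 := ideal_adjoin_sub e hL Lw.
    congr (_, _).
    + apply: u_inj; apply: (addgroup_trans g1 (addgroup_sym g1 (wu (i, j)))).
      exact: (addgroup_trans g1 Lw1 (wu (i', j'))).
    + apply: v_inj; apply: (addgroup_trans g2 (addgroup_sym g2 (wv (i, j)))).
      exact: (addgroup_trans g2 Lw2 (wv (i', j'))).
  have [i [l [r [Ll ea]]]] := u_onto a Logic.I.
  have [j [l' [r' [Ll' eb]]]] := v_onto a Logic.I.
  exists (i, j).
  have -> : a - w (i, j) = e * (l + (1 - e) * r) + (1 - e) * (l' + e * r').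
    by rewrite -ea -eb /w /=; ring.
  have -> : e * (l + (1 - e) * r) + (1 - e) * (l' + e * r') =
      e * l + (1 - e) * l' - (r + r') * (e * e - e) by ring.
  apply: (idealB hL); last exact: (idealMl hL).
  by apply: (idealD hL); apply: (idealMl hL).
by rewrite (index_unique (ideal_addgroup hL) hn hw) card_prod !card_ord.
Qed.

Lemma ideal_mul_adjoin I J a :
  is_ideal TT I -> is_ideal TT J -> ideal_mul I J (a * a - a) -> forall z,
  ideal_mul (ideal_adjoin I a) (ideal_adjoin J a) z <-> ideal_adjoin (ideal_mul I J) a z.
Proof.
move=> hI hJ IJa z; have hK := ideal_mul_ideal hI hJ.
have hKa := ideal_adjoin_ideal a hK.
have hKa' := ideal_mul_ideal (ideal_adjoin_ideal a hI) (ideal_adjoin_ideal a hJ).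
split.
- elim/ideal_mul_ind => [|x y|_ _ [l [r [Il ->]]] [l' [r' [Jl' ->]]]].
  + exact: ideal0 hKa.
  + exact: (idealD hKa).
  + exists (l * l'), (r * l' + l * r' + a * r * r'); split; first exact: ideal_mul_mem.
    ring.
- move=> [l [r [IJl ->]]]; apply: (idealD hKa').
    apply: (ideal_mul_mono _ _ IJl) => [x Ix | y Jy].
    + exact: ideal_adjoin_sub hI Ix.
    + exact: ideal_adjoin_sub hJ Jy.
  have -> : a * r = a * (a * r) - r * (a * a - a) by ring.
  apply: (idealB hKa').
    have := ideal_adjoin_gen a 1 hI; rewrite mulr1 => Ia.
    exact: (ideal_mul_mem Ia (ideal_adjoin_gen a r hJ)).
  apply: (ideal_mul_mono _ _ (idealMl hK Logic.I IJa)) => [x Ix | y Jy].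
  + exact: ideal_adjoin_sub hI Ix.
  + exact: ideal_adjoin_sub hJ Jy.
Qed.

Lemma idempotent_power K n x : is_ideal TT K -> ideal_index TT K n ->
  exists N, K (x ^+ N.+1 * x ^+ N.+1 - x ^+ N.+1).
Proof.
move=> hK hn; have gK := ideal_addgroup hK.
have [k [k' [lt_kk' Kk]]] := index_pigeonhole (f := fun k => x ^+ k) gK hn (fun _ => Logic.I).
set d := (k' - k)%N; have d_gt0 : (0 < d)%N by rewrite subn_gt0.
rewrite -(subnKC (ltnW lt_kk')) -/d in Kk.
have periodic t : K (x ^+ k - x ^+ (k + t * d)).
  elim: t => [|t IH]; first by rewrite mul0n addn0 subrr; exact: addgroup0 gK.
  have -> : x ^+ k - x ^+ (k + t.+1 * d) =
      (x ^+ k - x ^+ (k + t * d)) + x ^+ (t * d) * (x ^+ k - x ^+ (k + d)).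
    by rewrite mulSn !exprD; ring.
  exact: (addgroupD gK IH (idealMl hK Logic.I Kk)).
set M := (k.+1 * d)%N.
have M_gt0 : (0 < M)%N by rewrite muln_gt0.
have kM : (k <= M)%N by rewrite /M mulSn -{1}(addn0 k) addnC leq_add // ?leq_pmulr.
exists M.-1; rewrite prednK //.
have := idealMl hK (Logic.I : TT (x ^+ (M - k))) (periodic k.+1).
rewrite mulrBr -!exprD -/M (subnK kM) addnA (subnK kM) exprD.
exact: (addgroup_sym gK).
Qed.

Lemma ideal_exprB_mul L (a b : nat) x y e : is_ideal TT L ->
  L (x ^+ a * e) -> L (y ^+ b * e) -> L ((x - y) ^+ (a + b) * e).
Proof.
move=> hL Lx Ly; rewrite exprBn mulr_suml; apply: (ideal_sum hL) => i.
rewrite mulrnAl -mulr_natr; apply: (idealMr hL Logic.I).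
set s := (-1) ^+ i; case: (leqP b i) => [le_bi | lt_ib].
  rewrite -[X in y ^+ X](subnK le_bi) exprD.
  set u := x ^+ _; set v := y ^+ (i - b); set w := y ^+ b.
  have -> : s * u * (v * w) * e = (s * u * v) * (w * e) by ring.
  exact: (idealMl hL Logic.I Ly).
have le_a : (a <= a + b - i)%N by rewrite -addnBA ?leq_addr // ltnW.
rewrite -[X in x ^+ X](subnK le_a) exprD.
set u := x ^+ (_ - a); set v := y ^+ i; set w := x ^+ a.
have -> : s * (u * w) * v * e = (s * u * v) * (w * e) by ring.
exact: (idealMl hL Logic.I Lx).
Qed.

End Idempotents.

Definition primitive_idempotent (T : comRingType) (S K : T -> Prop) e :=
  [/\ S e, K (e * e - e), ~ K e &
      forall f, S f -> K (f * f - f) -> K (f * e - f) -> K f \/ K (f - e)].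

Section PrimitiveIdempotent.
Variables (T : comRingType) (S K : T -> Prop) (n : nat) (r : 'I_n -> T).
Local Notation TT := (fun _ : T => True).
Hypotheses (hS : is_subring S) (hK : is_ideal TT K).
Hypothesis r_onto : forall a, exists i, K (a - r i).
Let gK := ideal_addgroup hK.

Let multiples (e : T) := [set i : 'I_n | asbool (exists y, K (e * y - r i))].

Lemma multiples_proper e f : K (f * f - f) -> K (f * e - f) -> ~ K (f - e) ->
  multiples f \proper multiples e.
Proof.
move=> Kf Kfe nKfe; apply/properP; split.
  apply/subsetP => i; rewrite !inE => /asboolP [y Ky]; apply/asboolP; exists (f * y).
  have -> : e * (f * y) - r i = (f * y - r i) + (f * e - f) * y by ring.
  exact: (addgroupD gK Ky (idealMr hK Logic.I Kfe)).
have [i Ker] := r_onto e; exists i.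
  by rewrite inE; apply/asboolP; exists 1; rewrite mulr1.
rewrite inE; apply/negP => /asboolP [y Ky]; apply: nKfe.
have Kfy : K (f * y - e) := addgroup_trans gK Ky (addgroup_sym gK Ker).
have -> : f - e = (f * f - f) * y - (f * e - f) - f * (f * y - e) + (f * y - e) by ring.
apply: (addgroupD gK _ Kfy); apply: (addgroupB gK _ (idealMl hK Logic.I Kfy)).
exact: (addgroupB gK (idealMr hK Logic.I Kf) Kfe).
Qed.

(* Replacing e by any f = f e with f and f - e both nonzero modulo K strictly
   decreases the number of residue classes meeting e T. *)
Lemma exists_primitive_idempotent : ~ K 1 -> exists e, primitive_idempotent S K e.
Proof.
move=> nK1.
suff descend k e : S e -> K (e * e - e) -> ~ K e -> (#|multiples e| <= k)%N ->
    exists e, primitive_idempotent S K e.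
  apply: (descend #|multiples 1| 1) => //; first by case: hS.
  by rewrite mulr1 subrr; apply: addgroup0.
elim: k e => [|k IH] e Se Ke nKe.
  have [i Ker] := r_onto e; rewrite leqn0 cards_eq0 => /eqP Xe0.
  suff : i \in multiples e by rewrite Xe0 inE.
  by rewrite inE; apply/asboolP; exists 1; rewrite mulr1.
move=> Xe_le.
case: (classic (exists f, [/\ S f, K (f * f - f), K (f * e - f), ~ K f & ~ K (f - e)])).
  move=> [f [Sf Kf Kfe nKf nKfe]]; apply: (IH f) => //.
  by rewrite -ltnS (leq_trans (proper_card (multiples_proper Kf Kfe nKfe))).
move=> none; exists e; split => // f Sf Kf Kfe.
case: (classic (K f)) => [|nKf]; first by left.
case: (classic (K (f - e))) => [|nKfe]; first by right.
by case: none; exists f.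
Qed.

End PrimitiveIdempotent.

Section NilIdeal.
Variables (T : comRingType) (S K : T -> Prop) (n : nat) (e : T).
Local Notation TT := (fun _ : T => True).
Hypotheses (hS : is_subring S) (hK : is_ideal TT K) (hn : ideal_index TT K n).
Hypothesis he : primitive_idempotent S K e.
Let gK := ideal_addgroup hK.

Definition nil_ideal : T -> Prop := fun t => S t /\ exists k, K (t ^+ k * e).

(* Some power p of t is idempotent modulo K, hence so is p e, which lies below
   e; by primitivity p e is 0 (t is nilpotent) or e (t acts invertibly). *)
Lemma nil_ideal_unit_power t : S t -> ~ nil_ideal t -> exists N, K (t ^+ N.+1 * e - e).
Proof.
move=> St nil_t; have [N Kp] := idempotent_power t hK hn; exists N.
set p := t ^+ N.+1 in Kp *; have Sp : S p by apply: subringX.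
case: he => Se Ke _ prim.
have [Kpe | //] : K (p * e) \/ K (p * e - e).
  apply: prim; first exact: subringM.
    have -> : p * e * (p * e) - p * e = (p * p) * (e * e - e) + (p * p - p) * e by ring.
    exact: (addgroupD gK (idealMl hK Logic.I Ke) (idealMr hK Logic.I Kp)).
  have -> : p * e * e - p * e = p * (e * e - e) by ring.
  exact: (idealMl hK Logic.I Ke).
by case: nil_t; split => //; exists N.+1.
Qed.

Lemma nil_ideal_ideal : is_ideal S nil_ideal.
Proof.
split.
- by move=> x [].
- by split; [exact: subring0 hS | exists 1%N; rewrite expr1 mul0r; exact: addgroup0 gK].
- move=> x y [Sx [a Kx]] [Sy [b Ky]]; split; first exact: subringB.
  by exists (a + b)%N; apply: ideal_exprB_mul.
- move=> c x Sc [Sx [k Kx]]; split; first exact: subringM.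
  by exists k; rewrite exprMn -mulrA; apply: (idealMl hK).
Qed.

Lemma nil_ideal_maximal : is_maximal_ideal S nil_ideal.
Proof.
split; first exact: nil_ideal_ideal.
  by move=> [_ [k]]; rewrite expr1n mul1r; case: he.
move=> J hJ sub; case: (classic (forall x, J x -> nil_ideal x)) => [|not_sub]; first by left.
right; have [t not_imp] := not_all_ex_not _ _ not_sub.
have [Jt nil_t] := imply_to_and _ _ not_imp.
have St : S t := ideal_sub hJ Jt.
have [N KtN] := nil_ideal_unit_power St nil_t.
have StN : S (t ^+ N.+1) by apply: subringX.
have J1t : J (1 - t ^+ N.+1).
  apply: sub; split; first by apply: subringB => //; case: hS.
  by exists 1%N; rewrite expr1 mulrBl mul1r -opprB; apply: (addgroupN gK).
have Jt' : J (t ^+ N.+1) by rewrite exprSr; apply: (idealMl hJ) => //; apply: subringX.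
by rewrite -(subrK (t ^+ N.+1) 1); apply: (idealD hJ).
Qed.

End NilIdeal.

Section LocalFactor.
Variables (R : idomainType) (S I J : R -> Prop) (n : nat) (e : R).
Local Notation RR := (fun _ : R => True).
Local Notation tf := (@FracField.tofrac R).
Local Notation K := (ideal_mul I J).
Hypotheses (hS : is_subring S) (hI : is_ideal RR I) (hJ : is_ideal RR J).
Hypotheses (hn : ideal_index RR K n) (he : primitive_idempotent S K e).
Let hK := ideal_mul_ideal hI hJ.
Local Notation m := (nil_ideal S K e).
Let hm : is_maximal_ideal S m := nil_ideal_maximal hS hK hn he.
Local Notation Rm := (localization S m).
Local Notation ext := (extension S m).

Section CoarserIdeal.
Variables (L : R -> Prop) (hL : is_ideal RR L).
Hypotheses (KL : forall z, K z -> L z) (Le : L (1 - e)).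

Lemma nil_ideal_unit_mod t : S t -> ~ m t -> exists N, L (1 - t ^+ N.+1 * e).
Proof.
move=> St mt; have [N KtN] := nil_ideal_unit_power hS hK hn he St mt.
exists N; have -> : 1 - t ^+ N.+1 * e = (1 - e) - (t ^+ N.+1 * e - e) by ring.
exact: (idealB hL Le (KL KtN)).
Qed.

Lemma index_extension k : ideal_index RR L k -> ideal_index Rm (ext L) k.
Proof.
have tf_congr a a' : RR a -> RR a' -> L (a - a') <-> ext L (tf a - tf a').
  move=> _ _; split => [La | [b [s [Lb Ss ms eb]]]].
    by exists (a - a'), 1; split; [| case: hS | case: hm | rewrite tofrac1 divr1 tofracB].
  have ys : (a - a') * s = b.
    by apply/eqP; rewrite -tofrac_eq tofracM tofracB eb divfK // (tofrac_neq0 hm).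
  have [N LsN] := nil_ideal_unit_mod Ss ms.
  have -> : a - a' = (1 - s ^+ N.+1 * e) * (a - a') + s ^+ N * e * ((a - a') * s).
    by rewrite exprSr; ring.
  by rewrite ys; apply: (idealD hL); [apply: (idealMr hL) | apply: (idealMl hL)].
have tf_onto x : Rm x -> exists2 a, RR a & ext L (x - tf a).
  move=> [c [u [Su mu ->]]]; have [N LuN] := nil_ideal_unit_mod Su mu.
  exists (u ^+ N * e * c) => //; exists ((1 - u ^+ N.+1 * e) * c), u; split => //.
    exact: (idealMr hL).
  have -> : (1 - u ^+ N.+1 * e) * c = c - u * (u ^+ N * e * c) by rewrite exprS; ring.
  by rewrite tofracB [tf (u * _)]tofracM mulrBl [tf u * _]mulrC mulfK // (tofrac_neq0 hm).
move=> hk; apply/(index_transport (ideal_addgroup (extension_ideal hS hm hL))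
  (fun a _ => localization_tofrac hS hm a) tf_congr tf_onto).
exact: hk.
Qed.

End CoarserIdeal.

Lemma index_mul_local_factor : super_multiplicative Rm -> forall p q k,
  ideal_index RR (ideal_adjoin I (1 - e)) p -> ideal_index RR (ideal_adjoin J (1 - e)) q ->
  ideal_index RR (ideal_adjoin K (1 - e)) k -> (p * q <= k)%N.
Proof.
move=> smRm p q k hp hq hk.
have hI1 := ideal_adjoin_ideal (1 - e) hI; have hJ1 := ideal_adjoin_ideal (1 - e) hJ.
have hK1 := ideal_adjoin_ideal (1 - e) hK.
have gen L : is_ideal RR L -> ideal_adjoin L (1 - e) (1 - e).
  by move=> hL; have := ideal_adjoin_gen (1 - e) 1 hL; rewrite mulr1.
have sub L : is_ideal RR L -> forall z, L z -> ideal_adjoin L (1 - e) z.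
  by move=> hL z; apply: ideal_adjoin_sub.
have KI z : K z -> I z by apply: ideal_mul_subl hI _.
have KJ z : K z -> J z by apply: ideal_mul_subr hJ _.
have K1e : K ((1 - e) * (1 - e) - (1 - e)).
  by have [_ Ke _ _] := he; rewrite (_ : _ - _ = e * e - e) //; ring.
apply: (smRm _ _ (extension_ideal hS hm hI1) (extension_ideal hS hm hJ1) k).
- apply: (index_ext _ (index_extension hK1 (sub _ hK) (gen _ hK) hk)) => z.
  rewrite -extension_ideal_mul //; split=> [] [a [s [La Ss ms ->]]]; exists a, s; split => //.
  + by apply/(ideal_mul_adjoin hI hJ K1e).
  + by apply/(ideal_mul_adjoin hI hJ K1e).
- exact: (index_extension hI1 (fun z Kz => sub _ hI z (KI z Kz)) (gen _ hI) hp).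
- exact: (index_extension hJ1 (fun z Kz => sub _ hJ z (KJ z Kz)) (gen _ hJ) hq).
Qed.

End LocalFactor.

Section FromLocalizations.
Variables (R : idomainType) (S : R -> Prop).
Local Notation RR := (fun _ : R => True).
Hypothesis hS : is_subring S.
Hypothesis smRm : forall m, is_maximal_ideal S m -> super_multiplicative (localization S m).

Lemma super_multiplicative_step I J n : is_ideal RR I -> is_ideal RR J ->
  ideal_index RR (ideal_mul I J) n -> ~ ideal_mul I J 1 ->
  (forall n', (n' < n)%N -> forall I' J', is_ideal RR I' -> is_ideal RR J' ->
     forall p' q', ideal_index RR (ideal_mul I' J') n' ->
     ideal_index RR I' p' -> ideal_index RR J' q' -> (p' * q' <= n')%N) ->
  forall p q, ideal_index RR I p -> ideal_index RR J q -> (p * q <= n)%N.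
Proof.
move=> hI hJ hn nK1 IH p q hp hq.
have hK := ideal_mul_ideal hI hJ; have gK := ideal_addgroup hK.
have [e he] : exists e, primitive_idempotent S (ideal_mul I J) e.
  case: (hn) => r [_ _ r_onto].
  by apply: (exists_primitive_idempotent hS hK) => // a; apply: r_onto.
have [_ Ke nKe _] := he.
have [n1 [n2 [hn1 hn2 En]]] := index_idempotent_split hK Ke hn.
have Ie := ideal_mul_subl hI (ideal_sub hJ) Ke.
have Je := ideal_mul_subr hJ (ideal_sub hI) Ke.
have [p1 [p2 [hp1 hp2 Ep]]] := index_idempotent_split hI Ie hp.
have [q1 [q2 [hq1 hq2 Eq]]] := index_idempotent_split hJ Je hq.
have smRm' := smRm (nil_ideal_maximal hS hK hn he).
have local := index_mul_local_factor hS hI hJ hn he smRm' hp1 hq1 hn1.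
have n1_gt1 : (1 < n1)%N.
  apply: index_gt1 (ideal_addgroup (ideal_adjoin_ideal (1 - e) hK)) _ _ _ hn1 => //.
  move=> [l [r [Kl e1]]]; apply: nKe.
  have -> : e = e * l - r * (e * e - e) by rewrite -[LHS]mulr1 e1; ring.
  exact: (addgroupB gK (idealMl hK Logic.I Kl) (idealMl hK Logic.I Ke)).
have lt_n2 : (n2 < n)%N.
  by rewrite En -{1}(mul1n n2) ltn_mul2r n1_gt1 (index_gt0 _ hn2).
have hn2' : ideal_index RR (ideal_mul (ideal_adjoin I e) (ideal_adjoin J e)) n2.
  by apply: (index_ext _ hn2) => z; rewrite (ideal_mul_adjoin hI hJ Ke).
have := IH _ lt_n2 _ _ (ideal_adjoin_ideal e hI) (ideal_adjoin_ideal e hJ) _ _ hn2' hp2 hq2.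
by rewrite En Ep Eq mulnACA; apply: leq_mul.
Qed.

Lemma super_multiplicative_of_localizations : super_multiplicative RR.
Proof.
move=> I J hI hJ n; elim/ltn_ind: n I J hI hJ => n IH I J hI hJ p q hn hp hq.
have [K1 | nK1] := classic (ideal_mul I J 1); last first.
  exact: (super_multiplicative_step hI hJ hn nK1 IH).
have unit_index L k : is_ideal RR L -> L 1 -> ideal_index RR L k -> k = 1%N.
  move=> hL L1; apply: index_eq1 (ideal_addgroup hL) _ _ => // a _.
  by rewrite -(mulr1 a); apply: (idealMl hL).
rewrite (unit_index _ _ hI (ideal_mul_subl hI (fun _ _ => Logic.I) K1) hp).
rewrite (unit_index _ _ hJ (ideal_mul_subr hJ (fun _ _ => Logic.I) K1) hq).
exact: (index_gt0 _ hn).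
Qed.

End FromLocalizations.

Theorem lemma2p9 (R : idomainType) (S : R -> Prop) (HS : is_subring S) :
  super_multiplicative (fun _ : R => True) <->
  (forall m : R -> Prop, is_maximal_ideal S m ->
     super_multiplicative (localization S m)).
Proof.
split=> [smR m hm | smRm].
  exact: localization_super_multiplicative.
exact: super_multiplicative_of_localizations smRm.
Qed.
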